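(* Let $A_1,A_2$ be bounded operators on a Hilbert space and $n\ge0$ such that $\omega(A_1+A_2z)\le n$ for all $z\in\mathbb T$. Then $\omega(A_1+zA_2^* )\le n$ and $\omega(A_1^*+A_2z)\le n$ for all $z\in\mathbb T$.
   Context: $\omega(A)=\sup\{|\langle Ax,x\rangle|:\|x\|=1\}$ denotes the numerical radius; $\mathbb T$ is the unit circle. *)

From HB Require Import structures.
From mathcomp Require Import all_boot all_order all_algebra.
From mathcomp Require Import boolp classical_sets reals.
From mathcomp Require Import complex.
Set Implicit Arguments. Unset Strict Implicit. Unset Printing Implicit Defensive.
Import Order.TTheory GRing.Theory Num.Theory.
Local Open Scope ring_scope.
Local Open Scope complex_scope.

Section Hilbert.
Variables (R : realType) (V : lmodType R[i]).

Definition inner_product (ip : V -> V -> R[i]) : Prop :=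
  [/\ (forall (a : R[i]) (x y z : V), ip (a *: x + y) z = a * ip x z + ip y z),
      (forall x y : V, ip x y = (ip y x)^*),
      (forall x : V, 0 <= ip x x)
    & (forall x : V, ip x x = 0 -> x = 0)].

Definition ipnorm (ip : V -> V -> R[i]) (x : V) : R :=
  Num.sqrt (complex.Re (ip x x)).

Definition ip_complete (ip : V -> V -> R[i]) : Prop :=
  forall u : nat -> V,
    (forall e : R, 0 < e -> exists N : nat, forall m n : nat,
        (N <= m)%N -> (N <= n)%N -> ipnorm ip (u m - u n) < e) ->
    exists l : V, forall e : R, 0 < e -> exists N : nat, forall n : nat,
        (N <= n)%N -> ipnorm ip (u n - l) < e.

Definition hilbert_space (ip : V -> V -> R[i]) : Prop :=
  inner_product ip /\ ip_complete ip.

Definition bounded_op (ip : V -> V -> R[i]) (A : V -> V) : Prop :=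
  linear A /\ exists M : R, forall x : V, ipnorm ip (A x) <= M * ipnorm ip x.

Definition is_adjoint (ip : V -> V -> R[i]) (A B : V -> V) : Prop :=
  forall x y : V, ip (A x) y = ip x (B y).

Definition numrad (ip : V -> V -> R[i]) (A : V -> V) : R :=
  sup [set r : R | exists x : V, ipnorm ip x = 1 /\ r = complex.Re `|ip (A x) x|].

End Hilbert.

(** Put [a x = <A1 x, x>] and [b x = <A2 x, x>] for unit vectors [x].  Choosing
    the unimodular [z] that aligns the phases of [a x] and [z * b x], the
    hypothesis gives [|a x| + |b x| <= n] for every unit [x].  Since
    [<A^* x, x>] is the conjugate of [<A x, x>], both [A1 + z A2^*] and
    [A1^* + z A2] have [|<B x, x>| <= |a x| + |b x| <= n] at every unit [x].
    Boundedness of [A1] and [A2] only serves to make the numerical ranges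
    bounded, so that each [|<B x, x>|] lies below the supremum [numrad B]. *)

From HB Require Import structures.
From mathcomp Require Import all_boot all_order all_algebra.
From mathcomp Require Import boolp classical_sets reals.
From mathcomp Require Import complex.
From mathcomp Require Import ring.
Import Order.TTheory GRing.Theory Num.Theory.
Local Open Scope ring_scope.
Local Open Scope complex_scope.
Set Implicit Arguments. Unset Strict Implicit.

Lemma exists_phase_normD (C : numFieldType) (a b : C) :
  exists2 w : C, `|w| = 1 & `|a + w * b| = `|a| + `|b|.
Proof.
have [->|a0] := eqVneq a 0.
  by exists 1; rewrite ?normr1 // mul1r add0r normr0 add0r.
have [->|b0] := eqVneq b 0.
  by exists 1; rewrite ?normr1 // mulr0 addr0 normr0 addr0.
have na0 : `|a| != 0 by rewrite normr_eq0.
exists (a * `|b| / (`|a| * b)).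
  by rewrite normrM (normfV (`|a| * b)) !normrM !normr_id divff // mulf_neq0 ?normr_eq0.
have -> : a + a * `|b| / (`|a| * b) * b = a / `|a| * (`|a| + `|b|).
  by field; rewrite na0 b0.
by rewrite 2!normrM normfV normr_id divff // mul1r ger0_norm ?addr_ge0.
Qed.

Lemma normc_ReE (R : rcfType) (z : R[i]) : (complex.Re `|z|)%:C = `|z|.
Proof. exact/RRe_real/normr_real. Qed.

Section NumericalRadius.
Variables (R : realType) (V : lmodType R[i]) (ip : V -> V -> R[i]).

Lemma numrad_ge A x :
  (exists K : R, forall y, ipnorm ip y = 1 -> `|ip (A y) y| <= K%:C) ->
  ipnorm ip x = 1 -> `|ip (A x) x| <= (numrad ip A)%:C.
Proof.
move=> [K ubK] x1; rewrite -normc_ReE lecR.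
apply: sup_upper_bound; last by exists x.
split; first by exists (complex.Re `|ip (A x) x|), x.
by exists K => _ [y [y1 ->]]; rewrite -lecR normc_ReE ubK.
Qed.

Lemma numrad_le A n : 0 <= n ->
  (forall x, ipnorm ip x = 1 -> `|ip (A x) x| <= n%:C) -> numrad ip A <= n.
Proof.
move=> n0 ubn; rewrite /numrad; set E := (X in sup X).
have [E0|E0] := pselect (nonempty E); last by rewrite sup_out // => -[].
by apply: ge_sup => // _ [x [x1 ->]]; rewrite -lecR normc_ReE ubn.
Qed.

End NumericalRadius.

Section InnerProduct.
Variables (R : realType) (V : lmodType R[i]) (ip : V -> V -> R[i]).
Hypothesis ip_inner : inner_product ip.

Lemma ipDl x y z : ip (x + y) z = ip x z + ip y z.
Proof. by case: ip_inner => linl _ _ _; rewrite -[x]scale1r linl mul1r scale1r. Qed.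

Lemma ip0l z : ip 0 z = 0.
Proof. by apply/(addrI (ip 0 z)); rewrite -ipDl !addr0. Qed.

Lemma ipZl a x z : ip (a *: x) z = a * ip x z.
Proof. by case: ip_inner => linl _ _ _; rewrite -[a *: x]addr0 linl ip0l addr0. Qed.

Lemma ipBl x y z : ip (x - y) z = ip x z - ip y z.
Proof. by rewrite ipDl -scaleN1r ipZl mulN1r. Qed.

Lemma ipC x y : ip x y = (ip y x)^*.
Proof. by case: ip_inner. Qed.

Lemma ipDr x y z : ip x (y + z) = ip x y + ip x z.
Proof. by rewrite ipC ipDl rmorphD /= -!ipC. Qed.

Lemma ipZr a x y : ip x (a *: y) = a^* * ip x y.
Proof. by rewrite ipC ipZl rmorphM /= -ipC. Qed.

Lemma ipBr x y z : ip x (y - z) = ip x y - ip x z.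
Proof. by rewrite -scaleN1r ipDr ipZr rmorphN1 mulN1r. Qed.

Lemma ip_ge0 x : 0 <= ip x x.
Proof. by case: ip_inner. Qed.

Lemma ipnorm_ge0 x : 0 <= ipnorm ip x.
Proof. exact: sqrtr_ge0. Qed.

Lemma ipnormE x : ip x x = (ipnorm ip x ^+ 2)%:C.
Proof.
have ge0_Re : 0 <= complex.Re (ip x x) by move: (ip_ge0 x); rewrite lecE => /andP[].
by rewrite sqr_sqrtr // [LHS]complexE (ger0_Im (ip_ge0 x)) mulr0 addr0.
Qed.

Lemma ipnorm_eq1 x : ipnorm ip x = 1 -> ip x x = 1.
Proof. by rewrite ipnormE => ->; rewrite expr1n. Qed.

Lemma cauchy_schwarz_unit u y : ip y y = 1 -> `|ip u y| <= (ipnorm ip u)%:C.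
Proof.
move=> yy1; set l := ip u y.
have sq : `|l| ^+ 2 <= (ipnorm ip u)%:C ^+ 2.
  have := ip_ge0 (u - l *: y).
  rewrite !ipBl !ipBr !ipZl !ipZr yy1 -/l [ip y u]ipC -/l mulr1 subrr subr0.
  by rewrite subr_ge0 mulrC -normCK ipnormE rmorphXn.
by rewrite -(ler_pXn2r (n:=2)) // nnegrE ?normr_ge0 // ler0c ipnorm_ge0.
Qed.

Lemma bounded_op_numrange A : bounded_op ip A ->
  exists K : R, forall x, ipnorm ip x = 1 -> `|ip (A x) x| <= K%:C.
Proof.
case=> _ [M normA]; exists M => x x1.
apply: le_trans (cauchy_schwarz_unit (A x) (ipnorm_eq1 x1)) _.
by rewrite lecR -[M]mulr1 -x1 normA.
Qed.

Lemma norm_ip_addZ A B w x : `|w| = 1 ->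
  `|ip (A x + w *: B x) x| <= `|ip (A x) x| + `|ip (B x) x|.
Proof. by move=> w1; rewrite ipDl ipZl (le_trans (ler_normD _ _)) // normrM w1 mul1r. Qed.

Lemma norm_ip_adjoint A As x : is_adjoint ip A As -> `|ip (As x) x| = `|ip (A x) x|.
Proof. by move=> adj; rewrite ipC -adj normcJ. Qed.

Lemma numrad_pencil_sum_le A1 A2 n : bounded_op ip A1 -> bounded_op ip A2 ->
  (forall z : R[i], `|z| = 1 -> numrad ip (fun x => A1 x + z *: A2 x) <= n) ->
  forall x, ipnorm ip x = 1 -> `|ip (A1 x) x| + `|ip (A2 x) x| <= n%:C.
Proof.
move=> /bounded_op_numrange[K1 ub1] /bounded_op_numrange[K2 ub2] hyp x x1.
have [w w1 <-] := exists_phase_normD (ip (A1 x) x) (ip (A2 x) x).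
have ub : exists K : R, forall y, ipnorm ip y = 1 ->
    `|ip (A1 y + w *: A2 y) y| <= K%:C.
  exists (K1 + K2) => y y1; apply: le_trans (norm_ip_addZ _ _ _ w1) _.
  by rewrite rmorphD lerD ?ub1 ?ub2.
by rewrite -ipZl -ipDl (le_trans (numrad_ge ub x1)) // lecR hyp.
Qed.

End InnerProduct.

Theorem lemma4p6 (R : realType) (V : lmodType R[i]) (ip : V -> V -> R[i])
  (A1 A2 A1s A2s : V -> V) (n : R) :
  hilbert_space ip ->
  bounded_op ip A1 -> bounded_op ip A2 ->
  is_adjoint ip A1 A1s -> is_adjoint ip A2 A2s ->
  0 <= n ->
  (forall z : R[i], `|z| = 1 -> numrad ip (fun x => A1 x + z *: A2 x) <= n) ->
  forall z : R[i], `|z| = 1 ->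
    numrad ip (fun x => A1 x + z *: A2s x) <= n /\
    numrad ip (fun x => A1s x + z *: A2 x) <= n.
Proof.
move=> [ip_inner _] A1b A2b adj1 adj2 n0 hyp z z1.
have sum_le := numrad_pencil_sum_le ip_inner A1b A2b hyp.
split; apply: numrad_le => // x x1; apply: le_trans (norm_ip_addZ ip_inner _ _ _ z1) _.
- by rewrite (norm_ip_adjoint ip_inner _ adj2) sum_le.
- by rewrite (norm_ip_adjoint ip_inner _ adj1) sum_le.
Qed.
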